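(* Let $n\in\mathbb N$. The eigenvalues of $n(\mathfrak P^{(n)}_3+\mathfrak P^{(n)}_4)$ are exactly $0,2,4,\dots,2n-2$ if $n$ is odd, and exactly $1,3,5,\dots,2n-1$ if $n$ is even; in particular, all $n$ eigenvalues are simple.
   Context: For $n\in\mathbb N$, $\mathfrak P^{(n)}_1,\dots,\mathfrak P^{(n)}_4\in M_n(\mathbb R)$ denote orthogonal projections (real symmetric idempotent matrices) such that (i) $\mathfrak P^{(n)}_1+\dots+\mathfrak P^{(n)}_4=(2-\frac1n)I_n$; (ii) $\operatorname{rk}\mathfrak P^{(n)}_1=\lfloor\frac n2\rfloor-(-1)^n$ and $\operatorname{rk}\mathfrak P^{(n)}_i=\lfloor\frac n2\rfloor$ for $i=2,3,4$; (iii) the only subspaces of $\mathbb C^n$ invariant under all four matrices are $0$ and $\mathbb C^n$. Such quadruples exist for every $n$, and any two of them are simultaneously unitarily equivalent; moreover, any quadruple of orthogonal projections on a Hilbert space summing to $(2-\frac1n)I$ with no nontrivial common invariant closed subspace is unitarily equivalent to one of the four cyclic shifts $(\mathfrak P^{(n)}_{\sigma(1)},\dots,\mathfrak P^{(n)}_{\sigma(4)})$, $\sigma$ a power of the cycle $(1\,2\,3\,4)$, and these four are pairwise inequivalent. *)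

From HB Require Import structures.
From mathcomp Require Import all_boot all_order all_algebra.
From mathcomp Require Import reals.
From mathcomp.real_closed Require Import complex.
Set Implicit Arguments. Unset Strict Implicit. Unset Printing Implicit Defensive.
Import Order.TTheory GRing.Theory Num.Theory.
Local Open Scope ring_scope.

Definition orth_proj (R : realType) (n : nat) (P : 'M[R]_n) : Prop :=
  P^T = P /\ P *m P = P.

Definition cplx (R : realType) (n : nat) (P : 'M[R]_n) : 'M[R[i]]_n :=
  map_mx (fun x : R => Complex x 0) P.

(* The subspace of C^n spanned by the rows of U (a row vector u stands for the
   column vector u^T) is invariant under the matrix A acting on column vectors
   x |-> A x, i.e. A (row space of U)^T ⊆ (row space of U)^T; in row form:
   U *m A^T ⊆ U. *)
Definition invariant_subspace (C : fieldType) (n : nat) (U A : 'M[C]_n) : bool :=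
  (U *m A^T <= U)%MS.

Definition irreducible_quadruple (R : realType) (n : nat)
    (P1 P2 P3 P4 : 'M[R]_n) : Prop :=
  forall U : 'M[R[i]]_n,
    invariant_subspace U (cplx P1) -> invariant_subspace U (cplx P2) ->
    invariant_subspace U (cplx P3) -> invariant_subspace U (cplx P4) ->
    (U == (0 : 'M[R[i]]_n))%MS \/ (U == (1%:M : 'M[R[i]]_n))%MS.

From HB Require Import structures.
From mathcomp Require Import all_boot all_order all_algebra.
From mathcomp Require Import reals.
From mathcomp.real_closed Require Import complex.
From mathcomp Require Import ring lra.
Set Implicit Arguments. Unset Strict Implicit. Unset Printing Implicit Defensive.
Import Order.TTheory GRing.Theory Num.Theory.
Local Open Scope ring_scope.

(* Proof of Proposition 4.4.  Put e := 1/n and T := P3 + P4 - 1; then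
   A = n (T + 1), so it suffices to know the spectrum of T.
   - T is real symmetric, so its characteristic polynomial splits over R.
   - For any two idempotents P, Q the matrix D = P - Q anticommutes with
     S = P + Q - 1 and D^2 = 1 - S^2; hence m |-> -m maps eigenvalues of S
     to eigenvalues of S, except for m = +-1.  Applied to (P3, P4) this
     reflects the spectrum of T about 0; applied to (P1, P2), where
     P1 + P2 - 1 = -(T + e) by the sum hypothesis, it reflects it about -e.
     Composing both reflections translates eigenvalues of T by +-2e.
   - T >= -1 because P3 + P4 is positive semidefinite, and
     tr T = -(n mod 2) by the rank hypotheses on P3 and P4.
   - So the least eigenvalue r of T lies in [-1, -1 + 2e) (otherwise r - 2e
     would be a smaller one), and r, r + 2e, ..., r + 2(n-1)e are n distinct
     eigenvalues.  They exhaust the spectrum, each is simple, and comparing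
     traces gives n (r + 1) = 1 - (n mod 2), which yields the claim for A. *)

Section FieldSpectrum.
Variable F : fieldType.

Lemma eigenvalue_affine n (M : 'M[F]_n) (k c x : F) :
  eigenvalue M x -> eigenvalue (k *: (M + c%:M)) (k * (x + c)).
Proof.
move/eigenvalueP=> [v vM v_neq0]; apply/eigenvalueP; exists v => //.
by rewrite -scalemxAr mulmxDr vM mul_mx_scalar -scalerDl scalerA.
Qed.

Lemma char_poly_distinct_eigenvalues n (M : 'M[F]_n) (f : nat -> F) :
  injective f -> (forall j, (j < n)%N -> eigenvalue M (f j)) ->
  char_poly M = \prod_(x <- [seq f j | j <- iota 0 n]) ('X - x%:P).
Proof.
move=> f_inj f_eig.
have := all_roots_prod_XsubC (p := char_poly M) (rs := [seq f j | j <- iota 0 n]).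
rewrite (monicP (char_poly_monic M)) scale1r; apply.
- by rewrite size_char_poly size_map size_iota.
- apply/allP => x /mapP [j]; rewrite mem_iota add0n => /andP [_ jn] ->.
  by rewrite -eigenvalue_root_char f_eig.
- by rewrite uniq_rootsE map_inj_uniq ?iota_uniq.
Qed.

Lemma spectrum_distinct_eigenvalues n (M : 'M[F]_n) (f : nat -> F) :
  injective f -> (forall j, (j < n)%N -> eigenvalue M (f j)) ->
  (forall a, eigenvalue M a <-> exists2 k : nat, (k < n)%N & a = f k) /\
  (forall k, (k < n)%N -> mup (f k) (char_poly M) = 1%N).
Proof.
move=> f_inj f_eig; have charM := char_poly_distinct_eigenvalues f_inj f_eig.
split=> [a|k kn].
  rewrite eigenvalue_root_char charM root_prod_XsubC; split.
    by move/mapP => [j]; rewrite mem_iota add0n => /andP [_ jn] ->; exists j.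
  by move=> [k kn ->]; apply/mapP; exists k; rewrite // mem_iota add0n kn.
rewrite charM mu_prod_XsubC count_uniq_mem ?(map_inj_uniq f_inj) ?iota_uniq //.
by rewrite map_f // mem_iota add0n kn.
Qed.

Lemma mxtrace_split n (M : 'M[F]_n) (s : seq F) :
  (0 < n)%N -> char_poly M = \prod_(x <- s) ('X - x%:P) ->
  \tr M = \sum_(x <- s) x.
Proof.
move=> n_gt0 charM.
have size_s : size s = n.
  by have := size_char_poly M; rewrite charM size_prod_XsubC => -[].
have s_neq0 : size s != 0%N by rewrite size_s -lt0n.
have := char_poly_trace M n_gt0; rewrite charM.
move: (coefPn_prod_XsubC s_neq0); rewrite size_s => -> /eqP.
by rewrite eqr_opp => /eqP.
Qed.

Lemma mxtrace_idempotent n (P : 'M[F]_n) : P *m P = P -> \tr P = (\rank P)%:R.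
Proof.
move=> idP; have := mulmx_base P; have := row_base_free P.
have := col_base_full P; move: (col_base P) (row_base P) => C B C_full B_free CB.
have BC : B *m C = 1%:M.
  apply: (row_free_inj B_free); rewrite mul1mx; apply: (row_full_inj C_full).
  by rewrite !mulmxA CB -mulmxA CB idP.
by rewrite -{1}CB mxtrace_mulC BC mxtrace1.
Qed.

End FieldSpectrum.

Section IdempotentPair.
Variables (F : fieldType) (n : nat) (P Q : 'M[F]_n).
Hypotheses (idP : P *m P = P) (idQ : Q *m Q = Q).

Lemma idempotent_pair_identities :
  (P - Q) *m (P + Q - 1%:M) = - ((P + Q - 1%:M) *m (P - Q)) /\
  (P - Q) *m (P - Q) = 1%:M - (P + Q - 1%:M) *m (P + Q - 1%:M).
Proof.
rewrite !mulmxBl !mulmxDl !mulmxBr !mulmxDr !mulmx1 !mul1mx idP idQ.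
by split; apply/matrixP=> i j; rewrite !mxE; ring.
Qed.

(* If v S = m v with m^2 <> 1, then v D is a nonzero eigenvector for -m,
   since (v D) D = (1 - m^2) v. *)
Lemma idempotent_pair_reflection (m : F) : m ^+ 2 != 1 ->
  eigenvalue (P + Q - 1%:M) m -> eigenvalue (P + Q - 1%:M) (- m).
Proof.
move=> m2_neq1 /eigenvalueP [v vS v_neq0].
have [DS DD] := idempotent_pair_identities.
apply/eigenvalueP; exists (v *m (P - Q)).
  by rewrite -mulmxA DS mulmxN mulmxA vS -scalemxAl scaleNr.
have vDD : v *m (P - Q) *m (P - Q) = (1 - m ^+ 2) *: v.
  rewrite -mulmxA DD mulmxBr mulmx1 mulmxA vS -scalemxAl vS scalerA.
  by rewrite scalerBl scale1r expr2.
apply: contraNneq v_neq0 => vD0; move: vDD; rewrite vD0 mul0mx => /esym/eqP.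
by rewrite scaler_eq0 subr_eq0 eq_sym (negbTE m2_neq1).
Qed.

End IdempotentPair.

Section RealSymmetric.
Variable R : realType.

Lemma sqnorm_ge0 n (v : 'rV[R]_n) : 0 <= (v *m v^T) 0 0.
Proof. by rewrite !mxE; apply: sumr_ge0 => i _; rewrite mxE -expr2 sqr_ge0. Qed.

Lemma sqnorm_gt0 n (v : 'rV[R]_n) : v != 0 -> 0 < (v *m v^T) 0 0.
Proof.
move=> v_neq0; rewrite lt_def sqnorm_ge0 andbT; apply: contraNneq v_neq0.
rewrite !mxE => /eqP; rewrite psumr_eq0 => [/allP v0|j _]; last first.
  by rewrite mxE -expr2 sqr_ge0.
apply/eqP/rowP => i; have := v0 i (mem_index_enum _).
by rewrite !mxE -expr2 sqrf_eq0 => /eqP.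
Qed.

Lemma dotmxC n (u v : 'rV[R]_n) : (u *m v^T) 0 0 = (v *m u^T) 0 0.
Proof. by rewrite -[v *m u^T]trmxK trmx_mul trmxK [in RHS]mxE. Qed.

Lemma Re_mulmx_real n (x : 'rV[R[i]]_n) (A : 'M[R]_n) :
  map_mx (@complex.Re R) (x *m cplx A) = map_mx (@complex.Re R) x *m A.
Proof.
apply/rowP => j; rewrite !mxE (raddf_sum (@complex.Re R : Rcomplex R -> R)).
by apply: eq_bigr => k _; rewrite !mxE; case: (x 0 k) => a b /=; rewrite mulr0 subr0.
Qed.

Lemma Im_mulmx_real n (x : 'rV[R[i]]_n) (A : 'M[R]_n) :
  map_mx (@complex.Im R) (x *m cplx A) = map_mx (@complex.Im R) x *m A.
Proof.
apply/rowP => j; rewrite !mxE (raddf_sum (@complex.Im R : Rcomplex R -> R)).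
by apply: eq_bigr => k _; rewrite !mxE; case: (x 0 k) => a b /=; rewrite mulr0 add0r.
Qed.

Lemma Re_scale n (z : R[i]) (x : 'rV[R[i]]_n) :
  map_mx (@complex.Re R) (z *: x) =
  complex.Re z *: map_mx (@complex.Re R) x - complex.Im z *: map_mx (@complex.Im R) x.
Proof. by apply/rowP => j; rewrite !mxE; case: z; case: (x 0 j). Qed.

Lemma Im_scale n (z : R[i]) (x : 'rV[R[i]]_n) :
  map_mx (@complex.Im R) (z *: x) =
  complex.Im z *: map_mx (@complex.Re R) x + complex.Re z *: map_mx (@complex.Im R) x.
Proof. by apply/rowP => j; rewrite !mxE; case: z; case: (x 0 j) => a b c d /=; ring. Qed.

(* For an eigenvector x = a + ib of A with eigenvalue z, symmetry of A gives
   (a A) b^T = (b A) a^T, i.e. Im z (|a|^2 + |b|^2) = 0. *)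
Lemma symmetric_eigenvalue_real n (A : 'M[R]_n) (z : R[i]) :
  A^T = A -> eigenvalue (cplx A) z -> complex.Im z = 0.
Proof.
move=> A_sym /eigenvalueP [x xA x_neq0].
set a := map_mx (@complex.Re R) x; set b := map_mx (@complex.Im R) x.
have aA : a *m A = complex.Re z *: a - complex.Im z *: b.
  by rewrite -Re_mulmx_real xA Re_scale.
have bA : b *m A = complex.Im z *: a + complex.Re z *: b.
  by rewrite -Im_mulmx_real xA Im_scale.
have ab_gt0 : 0 < (a *m a^T) 0 0 + (b *m b^T) 0 0.
  have [a0|a_neq0] := eqVneq a 0; last first.
    by have := sqnorm_gt0 a_neq0; have := sqnorm_ge0 b; lra.
  have b_neq0 : b != 0.
    apply: contraNneq x_neq0 => b0; apply/eqP/rowP => j.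
    move/rowP: a0 => /(_ j); move/rowP: b0 => /(_ j); rewrite !mxE.
    by case: (x 0 j) => /= p q -> ->.
  by rewrite a0 mul0mx mxE add0r sqnorm_gt0.
have : (a *m A *m b^T) 0 0 = (b *m A *m a^T) 0 0.
  by rewrite dotmxC trmx_mul A_sym mulmxA.
rewrite aA bA mulmxBl mulmxDl -!scalemxAl.
move: (a *m a^T) (a *m b^T) (b *m a^T) (b *m b^T) (dotmxC b a) ab_gt0.
move=> aa ab ba bb ba_ab ab_gt0; rewrite !mxE ba_ab => E.
have : complex.Im z * (aa 0 0 + bb 0 0) = 0 by lra.
by move/eqP; rewrite mulf_eq0 (gt_eqF ab_gt0) orbF => /eqP.
Qed.

Lemma symmetric_char_poly_split n (A : 'M[R]_n) :
  A^T = A -> exists s : seq R, char_poly A = \prod_(x <- s) ('X - x%:P).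
Proof.
move=> A_sym.
have [r charA] := closed_field_poly_normal (char_poly (cplx A)).
rewrite (monicP (char_poly_monic _)) scale1r in charA.
have r_real z : z \in r -> z = real_complex R (complex.Re z).
  move=> zr; have : root (char_poly (cplx A)) z by rewrite charA root_prod_XsubC.
  rewrite -eigenvalue_root_char => /(symmetric_eigenvalue_real A_sym).
  by case: z {zr} => p q /= ->.
exists (map (@complex.Re R) r); apply: (@map_poly_inj _ _ (real_complex R)).
rewrite map_char_poly charA map_prod_XsubC big_map.
by apply: eq_big_seq => z /r_real {1}->.
Qed.

Lemma orth_proj_sum_eigenvalue_ge0 n (P Q : 'M[R]_n) (mu : R) :
  orth_proj P -> orth_proj Q -> eigenvalue (P + Q) mu -> 0 <= mu.
Proof.
move=> [P_sym idP] [Q_sym idQ] /eigenvalueP [v vPQ v_neq0].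
have form_proj (S : 'M[R]_n) : S^T = S -> S *m S = S ->
    v *m S *m v^T = (v *m S) *m (v *m S)^T.
  by move=> S_sym idS; rewrite trmx_mul S_sym mulmxA -(mulmxA v S S) idS.
have : (v *m (P + Q) *m v^T) 0 0 = mu * (v *m v^T) 0 0.
  by rewrite vPQ -scalemxAl mxE.
rewrite mulmxDr mulmxDl mxE (form_proj P) // (form_proj Q) // => E.
rewrite -(pmulr_lge0 _ (sqnorm_gt0 v_neq0)) -E.
by rewrite addr_ge0 ?sqnorm_ge0.
Qed.

End RealSymmetric.

Lemma seq_min (R : realDomainType) (s : seq R) : s != [::] ->
  exists2 r, r \in s & forall x, x \in s -> r <= x.
Proof.
elim: s => [//|a s IH] _.
have [->|s_neq0] := eqVneq s [::].
  by exists a; rewrite ?mem_seq1 // => x; rewrite mem_seq1 => /eqP ->.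
have [r rs r_min] := IH s_neq0.
have [ar|ra] := leP a r.
  exists a; first by rewrite mem_head.
  by move=> x; rewrite in_cons => /orP [/eqP -> //|/r_min]; exact: le_trans.
exists r; first by rewrite in_cons rs orbT.
by move=> x; rewrite in_cons => /orP [/eqP ->|/r_min //]; exact: ltW.
Qed.

Lemma sum_seq_ge (R : numDomainType) (s : seq R) (c : R) :
  (forall x, x \in s -> c <= x) -> c *+ size s <= \sum_(x <- s) x.
Proof.
elim: s => [|a s IH] s_ge; first by rewrite big_nil mulr0n.
rewrite big_cons /= mulrS lerD ?s_ge ?mem_head // IH // => x xs.
by rewrite s_ge // in_cons xs orbT.
Qed.

Lemma sum_arith_progression (R : comNzRingType) (a b : R) m :
  \sum_(j <- iota 0 m) (a + j%:R * (2 * b)) = m%:R * a + m%:R * (m%:R - 1) * b.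
Proof.
elim: m => [|m IH]; first by rewrite big_nil !mul0r addr0.
by rewrite -addn1 iotaD big_cat IH /= big_cons big_nil add0n natrD; ring.
Qed.

Lemma sqr_neq1 (R : realDomainType) (x : R) : -1 < x -> x < 1 -> x ^+ 2 != 1.
Proof. by move=> x_gtN1 x_lt1; rewrite sqrf_eq1 negb_or (lt_eqF x_lt1) (gt_eqF x_gtN1). Qed.

Section Quadruple.
Variables (R : realType) (n : nat) (P1 P2 P3 P4 : 'M[R]_n).
Hypotheses (n_gt0 : (0 < n)%N) (idem1 : P1 *m P1 = P1) (idem2 : P2 *m P2 = P2).
Hypotheses (proj3 : orth_proj P3) (proj4 : orth_proj P4).
Hypothesis sumP : P1 + P2 + P3 + P4 = (2 - n%:R^-1)%:M.
Hypotheses (rank3 : \rank P3 = n./2) (rank4 : \rank P4 = n./2).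

Local Notation e := (n%:R^-1 : R).
Local Notation T := (P3 + P4 - 1%:M).

Let e_gt0 : 0 < e. Proof. by rewrite invr_gt0 ltr0n. Qed.

Let n_mul_e : n%:R * e = 1. Proof. by rewrite mulfV // pnatr_eq0 -lt0n. Qed.

Lemma T_symmetric : T^T = T.
Proof. by rewrite linearB linearD /= proj3.1 proj4.1 trmx1. Qed.

(* T + 1 = P3 + P4 is positive semidefinite. *)
Lemma T_eigenvalue_ge l : eigenvalue T l -> -1 <= l.
Proof.
move=> /(eigenvalue_affine 1 1); rewrite subrK scale1r mul1r.
by move=> /(orth_proj_sum_eigenvalue_ge0 proj3 proj4); lra.
Qed.

(* tr T = rk P3 + rk P4 - n = 2 (n / 2) - n. *)
Lemma T_trace : \tr T = - (odd n)%:R.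
Proof.
have n_split : n%:R = (odd n)%:R + (n./2)%:R * 2 :> R.
  by rewrite -{1}(odd_double_half n) natrD -muln2 natrM.
rewrite linearB linearD /= mxtrace1.
by rewrite (mxtrace_idempotent proj3.2) (mxtrace_idempotent proj4.2) rank3 rank4; lra.
Qed.

Lemma T_reflect l : eigenvalue T l -> l ^+ 2 != 1 -> eigenvalue T (- l).
Proof. by move=> Tl l2; apply: idempotent_pair_reflection proj3.2 proj4.2 _ l2 Tl. Qed.

(* Reflection about -e, from the pair (P1, P2): P1 + P2 - 1 = -(T + e). *)
Lemma T_reflect_shift l : eigenvalue T l -> (l + e) ^+ 2 != 1 ->
  eigenvalue T (- l - 2 * e).
Proof.
have S12 : P1 + P2 - 1%:M = -1 *: (T + e%:M).
  apply/matrixP => i j; move/matrixP: sumP => /(_ i j); rewrite !mxE.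
  by case: (i == j) => /=; rewrite ?mulr1n ?mulr0n; lra.
have TS : T = -1 *: (P1 + P2 - 1%:M + e%:M).
  by rewrite S12 scalerDr scalerA mulrNN mulr1 scale1r scaleN1r addrK.
move=> /(eigenvalue_affine (-1) e); rewrite -S12 => S_l l2.
have l2' : (-1 * (l + e)) ^+ 2 != 1 by rewrite mulN1r sqrrN.
have := eigenvalue_affine (-1) e (idempotent_pair_reflection idem1 idem2 l2' S_l).
by rewrite -TS; congr eigenvalue; ring.
Qed.

(* Composing the two reflections translates eigenvalues by 2e. *)
Lemma T_step_up l : eigenvalue T l -> l + 2 * e < 1 -> eigenvalue T (l + 2 * e).
Proof.
move=> Tl l_lt; have := T_eigenvalue_ge Tl; have := e_gt0 => e_pos l_ge.
have Tl' : eigenvalue T (- l - 2 * e).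
  by apply: T_reflect_shift => //; apply: sqr_neq1; lra.
have -> : l + 2 * e = - (- l - 2 * e) by ring.
by apply: T_reflect Tl' _; apply: sqr_neq1; lra.
Qed.

Lemma T_step_down l : eigenvalue T l -> -1 + 2 * e <= l -> l < 1 ->
  eigenvalue T (l - 2 * e).
Proof.
move=> Tl l_ge l_lt; have := e_gt0 => e_pos.
have Tl' : eigenvalue T (- l) by apply: T_reflect => //; apply: sqr_neq1; lra.
have -> : l - 2 * e = - (- l) - 2 * e by rewrite opprK.
by apply: T_reflect_shift Tl' _; apply: sqr_neq1; lra.
Qed.

(* The least eigenvalue r satisfies -1 <= r < -1 + 2e: it is < 1 since
   tr T <= 0 < n, and r - 2e would otherwise be a smaller eigenvalue. *)
Lemma T_least_eigenvalue :
  exists r, [/\ eigenvalue T r, -1 <= r & r < -1 + 2 * e].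
Proof.
have [s charT] := symmetric_char_poly_split T_symmetric.
have eigT x : eigenvalue T x = (x \in s).
  by rewrite eigenvalue_root_char charT root_prod_XsubC.
have size_s : size s = n.
  by have := size_char_poly T; rewrite charT size_prod_XsubC => -[].
have [|r rs r_min] := seq_min (s := s); first by rewrite -size_eq0 size_s -lt0n.
have Tr : eigenvalue T r by rewrite eigT.
have r_lt1 : r < 1.
  rewrite ltNge; apply/negP => r_ge1.
  have := sum_seq_ge (fun x xs => le_trans r_ge1 (r_min x xs)).
  rewrite -(mxtrace_split n_gt0 charT) T_trace size_s.
  have : 0 < n%:R :> R by rewrite ltr0n.
  by have : 0 <= (odd n)%:R :> R by []; lra.
exists r; split; rewrite ?T_eigenvalue_ge // ltNge; apply/negP => r_ge2.
have := T_step_down Tr r_ge2 r_lt1; rewrite eigT => /r_min.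
by have := e_gt0; lra.
Qed.

(* From such an r the ladder r + 2je, j < n, consists of eigenvalues:
   each rung stays below 1 - 2e. *)
Lemma T_ladder r : eigenvalue T r -> r < -1 + 2 * e ->
  forall j, (j < n)%N -> eigenvalue T (r + j%:R * (2 * e)).
Proof.
move=> Tr r_lt; elim=> [_|j IH jn]; first by rewrite mul0r addr0.
rewrite -addn1 natrD mulrDl mul1r addrA; apply: T_step_up (IH (ltnW jn)) _.
have : (j + 2 <= n)%N by rewrite addn2.
rewrite -(ler_nat R) natrD => /(ler_wpM2r (ltW e_gt0)); rewrite mulrDl n_mul_e => je.
by lra.
Qed.

(* The ladder is the whole spectrum, and comparing traces fixes r. *)
Lemma T_spectrum : exists r, n%:R * (r + 1) = 1 - (odd n)%:R /\
  forall j, (j < n)%N -> eigenvalue T (r + j%:R * (2 * e)).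
Proof.
have [r [Tr _ r_lt]] := T_least_eigenvalue; exists r.
have ladder := T_ladder Tr r_lt; split => //.
have f_inj : injective (fun j : nat => r + j%:R * (2 * e)).
  have two_e_gt0 : 0 < 2 * e by rewrite mulr_gt0.
  by move=> j k /addrI /(mulIf (lt0r_neq0 two_e_gt0)) /eqP; rewrite eqr_nat => /eqP.
have := mxtrace_split n_gt0 (char_poly_distinct_eigenvalues f_inj ladder).
rewrite T_trace big_map sum_arith_progression mulrAC n_mul_e mul1r; lra.
Qed.

(* Since A = n (T + 1), the eigenvalues of A are n (r + 1) + 2j. *)
Lemma scaled_sum_eigenvalue k : (k < n)%N ->
  eigenvalue (n%:R *: (P3 + P4))
    (if odd n then (2 * k)%N%:R else (2 * k + 1)%N%:R).
Proof.
move=> kn; have [r [r_val ladder]] := T_spectrum.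
have := eigenvalue_affine n%:R 1 (ladder k kn); rewrite subrK.
congr eigenvalue.
have -> : n%:R * (r + k%:R * (2 * e) + 1) = n%:R * (r + 1) + 2 * k%:R * (n%:R * e).
  by ring.
by rewrite r_val n_mul_e; case: (odd n) => /=; ring.
Qed.

End Quadruple.

Theorem proposition4p4 (R : realType) (n : nat) (P1 P2 P3 P4 : 'M[R]_n) :
  (0 < n)%N ->
  orth_proj P1 -> orth_proj P2 -> orth_proj P3 -> orth_proj P4 ->
  P1 + P2 + P3 + P4 = (2 - n%:R^-1)%:M ->
  (\rank P1)%:Z = (n./2)%:Z - (-1) ^+ n ->
  \rank P2 = n./2 -> \rank P3 = n./2 -> \rank P4 = n./2 ->
  irreducible_quadruple P1 P2 P3 P4 ->
  let A := n%:R *: (P3 + P4) in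
  let ev := fun k : nat => (if odd n then (2 * k)%N%:R else (2 * k + 1)%N%:R) : R in
  (forall a : R, eigenvalue A a <-> exists2 k : nat, (k < n)%N & a = ev k) /\
  (forall k : nat, (k < n)%N -> mup (ev k) (char_poly A) = 1%N).
Proof.
move=> n_gt0 [_ idem1] [_ idem2] proj3 proj4 sumP _ _ rank3 rank4 _ A ev.
apply: spectrum_distinct_eigenvalues.
  move=> j k; rewrite /ev; case: (odd n) => /eqP; rewrite eqr_nat.
    by rewrite eqn_pmul2l // => /eqP.
  by rewrite eqn_add2r eqn_pmul2l // => /eqP.
exact: scaled_sum_eigenvalue n_gt0 idem1 idem2 proj3 proj4 sumP rank3 rank4.
Qed.
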